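(* Let $x,v$ be positive integers with $xv\ge2$. Let $\lambda=(x,\dots,x)$ with $x$ occurring $v$ times and $\lambda'=(v,\dots,v)$ with $v$ occurring $x$ times. Then the posets $P(\lambda)$ and $P(\lambda')$ are isomorphic.
   Context: For a vector $\mu=(\mu_1,\dots,\mu_d)$ of positive integers with sum $n\ge2$, $\Delta_\mu=\mathrm{conv}(e_1,\dots,e_d,\mu)\subset\mathbb{R}^d$ has fundamental parallelepiped $\Pi_\mu=\{\sum_{i=1}^d\gamma_i(1,e_i)+\gamma_{d+1}(1,\mu):0\le\gamma_i<1\}\subset\mathbb{R}^{d+1}$. $P(\mu)$ is the set $\Pi_\mu\cap\mathbb{Z}^{d+1}$ ordered by $\sigma\preceq\tau$ iff $\tau-\sigma\in\Pi_\mu\cap\mathbb{Z}^{d+1}$. *)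

From mathcomp Require Import all_boot all_order all_algebra.
Unset Strict Implicit. Unset Printing Implicit Defensive.
Import Order.TTheory GRing.Theory Num.Theory.
Local Open Scope ring_scope.

(* mu = (mu_1,...,mu_d) is a seq nat with d = size mu.  Points of Z^{d+1} are
   row vectors 'rV[int]_(d.+1); coordinate 0 is the leading "1" coordinate,
   coordinate k (1 <= k <= d) is the k-th coordinate of R^d. *)

(* gen mu j k : k-th coordinate of the j-th generator of Pi_mu,
   generator j (j < d) is (1, e_{j+1}); generator d is (1, mu). *)
Definition gen (mu : seq nat) (j k : nat) : rat :=
  if k == 0%N then 1
  else if (j < size mu)%N then ((j.+1 == k) : nat)%:R
  else (nth 0%N mu k.-1)%:R.

Definition inPi (mu : seq nat) (p : 'rV[int]_(size mu).+1) : Prop :=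
  exists gam : 'I_(size mu).+1 -> rat,
    (forall j, 0 <= gam j /\ gam j < 1) /\
    forall k : 'I_(size mu).+1,
      (p ord0 k)%:~R = \sum_(j < (size mu).+1) gam j * gen mu j k.

Definition Pset (mu : seq nat) (p : 'rV[int]_(size mu).+1) : Prop := inPi mu p.

Definition Ple (mu : seq nat) (s t : 'rV[int]_(size mu).+1) : Prop :=
  inPi mu (t - s).

Definition poset_iso {T U : Type} (A : T -> Prop) (leA : T -> T -> Prop)
  (B : U -> Prop) (leB : U -> U -> Prop) : Prop :=
  exists (f : T -> U) (g : U -> T),
    (forall a, A a -> B (f a)) /\ (forall b, B b -> A (g b)) /\
    (forall a, A a -> g (f a) = a) /\ (forall b, B b -> f (g b) = b) /\
    (forall a1 a2, A a1 -> A a2 -> (leA a1 a2 <-> leB (f a1) (f a2))).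

Definition Piso (mu nu : seq nat) : Prop :=
  poset_iso (Pset mu) (@Ple mu) (Pset nu) (@Ple nu).

From mathcomp Require Import all_boot all_order all_algebra.
From mathcomp Require Import ring lra zify.
Import GRing.Theory Num.Theory.
Local Open Scope ring_scope.

(* For mu = (a,...,a) with d entries, write a point of Pi_mu as
   sum_i g_i (1, e_i) + t (1, mu).  If it is a lattice point, the coordinates
   g_i + a t are integers with |g_i - g_j| < 1, so all g_i equal some g and the
   point is determined by its height h = d g + t and common coordinate
   c = g + a t.  Solving, with N = d a - 1, gives t = (d c - h) / N and
   g = (a h - c) / N, so P(mu) is {(h, c) | 0 <= d c - h < N, 0 <= a h - c < N}.
   This description is invariant under (d, a, h, c) |-> (a, d, c, h), and
   exchanging height and common coordinate is additive, hence an isomorphism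
   of posets P(a^d) ~ P(d^a). *)

Definition height {n} (p : 'rV[int]_n.+1) : int := p ord0 ord0.
(* Meaningful only for n > 0: for n = 0, [inord 1] is [ord0]. *)
Definition base {n} (p : 'rV[int]_n.+1) : int := p ord0 (inord 1).

Definition tail_const {n} (p : 'rV[int]_n.+1) : Prop :=
  forall j : 'I_n, p ord0 (lift ord0 j) = base p.

Definition window (d a : nat) (h c : int) : bool :=
  (0 <= d%:Z * c - h < (d * a)%N%:Z - 1) && (0 <= a%:Z * h - c < (d * a)%N%:Z - 1).

Lemma window_sym d a h c : window d a h c = window a d c h.
Proof. by rewrite /window mulnC andbC. Qed.

Lemma int_range_frac (z n : int) :
  0 < n -> (0 <= z < n) = (0 <= (z%:~R / n%:~R : rat) < 1).
Proof.
move=> n_gt0; have n_gt0' : 0 < n%:~R :> rat by rewrite ltr0z.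
by rewrite pmulr_lge0 ?invr_gt0 // ltr_pdivrMr // mul1r ler0z ltr_int.
Qed.

Lemma eq_int_frac {m n : int} {x y : rat} :
  0 <= x < 1 -> 0 <= y < 1 -> m%:~R - x = n%:~R - y -> m = n.
Proof.
move=> /andP[x0 x1] /andP[y0 y1] e.
have lt1 : (m - n)%:~R < 1%:~R :> rat by rewrite intrB; lra.
have gtN1 : (-1)%:~R < (m - n)%:~R :> rat by rewrite intrB; lra.
rewrite ltr_int in lt1; rewrite ltr_int in gtN1; lia.
Qed.

Lemma height_base_coeffsE {d a h c t g : rat} : d * a - 1 != 0 ->
  (c = g + a * t /\ h = d * g + t) <->
  (t = (d * c - h) / (d * a - 1) /\ g = (a * h - c) / (d * a - 1)).
Proof. by move=> N_neq0; split=> -[-> ->]; split; field. Qed.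

Section ConstantVector.

Context {a : nat} {mu : seq nat}.
Hypotheses (mu_const : all (pred1 a) mu) (mu_big : (2 <= size mu * a)%N).
Local Notation d := (size mu).
Local Notation N := ((d * a)%N%:Z - 1).

Lemma size_gt0 : (0 < d)%N.
Proof. by move: mu_big; case: (d). Qed.

Lemma gen_sum_height (gam : 'I_d.+1 -> rat) :
  \sum_(j < d.+1) gam j * gen mu j 0 =
  \sum_(j < d) gam (widen_ord (leqnSn d) j) + gam ord_max.
Proof. by rewrite big_ord_recr /= mulr1; under eq_bigr do rewrite mulr1. Qed.

Lemma gen_sum_lift (gam : 'I_d.+1 -> rat) (i : 'I_d) :
  \sum_(j < d.+1) gam j * gen mu j (lift ord0 i) =
  gam (widen_ord (leqnSn d) i) + gam ord_max * a%:R.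
Proof.
have /all_nthP nth_a := mu_const.
rewrite big_ord_recr /gen /= ltnn (eqP (nth_a 0%N i (ltn_ord i))).
rewrite (bigD1 i) //= ltn_ord eqxx mulr1 big1 ?addr0 // => j /negbTE ji.
by rewrite ltn_ord eqSS val_eqE ji mulr0.
Qed.

Lemma N_rat : N%:~R = d%:R * a%:R - 1 :> rat.
Proof. by rewrite intrB -natrM. Qed.

Lemma N_gt0 : 0 < N.
Proof. lia. Qed.

Lemma inPi_window p : inPi mu p -> tail_const p /\ window d a (height p) (base p).
Proof.
case=> gam [gam01 gamE].
have {}gam01 j : 0 <= gam j < 1 by case: (gam01 j) => -> ->.
pose i0 : 'I_d := Ordinal size_gt0.
have base_i0 : base p = p ord0 (lift ord0 i0).
  rewrite /base (_ : inord 1 = lift ord0 i0) //.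
  by apply: val_inj; rewrite /= inordK // ltnS size_gt0.
set t := gam ord_max; set g := gam (widen_ord (leqnSn d) i0).
have tailE (i : 'I_d) :
    (p ord0 (lift ord0 i))%:~R - gam (widen_ord (leqnSn d) i) = a%:R * t.
  by rewrite gamE gen_sum_lift addrC addKr mulrC.
have tail_p : tail_const p.
  move=> i; rewrite base_i0.
  apply: (eq_int_frac (gam01 (widen_ord _ i)) (gam01 (widen_ord _ i0))).
  by rewrite !tailE.
have gamE' (i : 'I_d) : gam (widen_ord (leqnSn d) i) = g.
  by have := tailE i; rewrite tail_p base_i0 -(tailE i0) /g; lra.
have hE : (height p)%:~R = d%:R * g + t.
  rewrite gamE gen_sum_height (eq_bigr _ (fun i _ => gamE' i)).
  by rewrite sumr_const card_ord mulr_natl.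
have cE : (base p)%:~R = g + a%:R * t.
  by rewrite base_i0 -(tailE i0) addrC subrK.
have N_neq0 : d%:R * a%:R - 1 != 0 :> rat by rewrite -N_rat intr_eq0 lt0r_neq0 ?N_gt0.
have [tE gE] := (height_base_coeffsE N_neq0).1 (conj cE hE).
split=> //; rewrite /window !int_range_frac ?N_gt0 //.
rewrite N_rat !intrB !intrM -tE -gE.
by move: (gam01 ord_max) (gam01 (widen_ord (leqnSn d) i0)) => -> /andP[-> ->].
Qed.

Lemma window_inPi p : tail_const p -> window d a (height p) (base p) -> inPi mu p.
Proof.
move=> tail_p /andP[t01 g01].
have N_neq0 : d%:R * a%:R - 1 != 0 :> rat by rewrite -N_rat intr_eq0 lt0r_neq0 ?N_gt0.
pose t : rat := (d%:Z * base p - height p)%:~R / N%:~R.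
pose g : rat := (a%:Z * height p - base p)%:~R / N%:~R.
rewrite int_range_frac ?N_gt0 // -/t in t01.
rewrite int_range_frac ?N_gt0 // -/g in g01.
have [cE hE] : (base p)%:~R = g + a%:R * t /\ (height p)%:~R = d%:R * g + t.
  by apply/(height_base_coeffsE N_neq0); rewrite /t /g N_rat !intrB !intrM.
exists (fun j => if j == ord_max then t else g); split.
  by move=> j; case: eqP => _; [move: t01 | move: g01] => /andP[-> ->].
move=> k; case: (unliftP ord0 k) => [j ->|->].
  rewrite gen_sum_lift eqxx -(inj_eq val_inj) /= ltn_eqF //.
  by rewrite tail_p cE mulrC.
rewrite gen_sum_height eqxx.
under eq_bigr => j _ do rewrite -(inj_eq val_inj) /= ltn_eqF //.
by rewrite sumr_const card_ord -mulr_natl -hE.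
Qed.

Lemma inPi_tail_const p : inPi mu p -> tail_const p.
Proof. by case/inPi_window. Qed.

Lemma inPi_windowE p : inPi mu p <-> tail_const p /\ window d a (height p) (base p).
Proof. by split=> [/inPi_window | [/window_inPi]]. Qed.

End ConstantVector.

Definition swap_row {n} m (p : 'rV[int]_n.+1) : 'rV[int]_m.+1 :=
  \row_k if k == ord0 then base p else height p.

Section SwapRow.

Context {n m : nat}.
Implicit Types p q : 'rV[int]_n.+1.

Lemma swap_rowB p q : swap_row m (q - p) = swap_row m q - swap_row m p.
Proof. by apply/rowP => k; rewrite !mxE /base /height !mxE; case: ifP. Qed.

Lemma tail_constB p q : tail_const p -> tail_const q -> tail_const (q - p).
Proof. by move=> tail_p tail_q j; rewrite /base !mxE tail_p tail_q. Qed.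

Lemma height_swap p : height (swap_row m p) = base p.
Proof. by rewrite /height mxE eqxx. Qed.

Hypothesis m_gt0 : (0 < m)%N.

Lemma base_swap p : base (swap_row m p) = height p.
Proof. by rewrite /base mxE -(inj_eq val_inj) /= inordK. Qed.

Lemma tail_const_swap p : tail_const (swap_row m p).
Proof. by move=> j; rewrite base_swap mxE. Qed.

Lemma swap_rowK p : tail_const p -> swap_row n (swap_row m p) = p.
Proof.
move=> tail_p; apply/rowP => k; rewrite mxE.
by case: (unliftP ord0 k) => [j ->|->] /=; rewrite ?base_swap ?height_swap ?tail_p.
Qed.

End SwapRow.

Lemma inPi_swap {d a : nat} {p : 'rV[int]_(size (nseq d a)).+1} :
  (2 <= d * a)%N -> tail_const p ->
  inPi (nseq a d) (swap_row _ p) <-> inPi (nseq d a) p.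
Proof.
move=> da_big tail_p.
have big_a : (2 <= size (nseq d a) * a)%N by rewrite size_nseq.
have big_d : (2 <= size (nseq a d) * d)%N by rewrite size_nseq mulnC.
have size_gt0_ad : (0 < size (nseq a d))%N by apply: size_gt0 big_d.
rewrite (inPi_windowE (all_pred1_nseq _ _) big_a).
rewrite (inPi_windowE (all_pred1_nseq _ _) big_d).
rewrite base_swap // height_swap window_sym.
have -> : window d (size (nseq a d)) = window (size (nseq d a)) a by rewrite !size_nseq.
by split=> -[_ w]; split=> //; apply: tail_const_swap.
Qed.

Theorem corollary4p2 (x v : nat) (hx : (0 < x)%N) (hv : (0 < v)%N)
  (hxv : (2 <= x * v)%N) :
  Piso (nseq v x) (nseq x v).
Proof.
have hvx : (2 <= v * x)%N by rewrite mulnC.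
have tail_v p : inPi (nseq v x) p -> tail_const p.
  by apply: (inPi_tail_const (all_pred1_nseq _ _)); rewrite size_nseq.
have tail_x q : inPi (nseq x v) q -> tail_const q.
  by apply: (inPi_tail_const (all_pred1_nseq _ _)); rewrite size_nseq.
have sv : (0 < size (nseq v x))%N by rewrite size_nseq.
have sx : (0 < size (nseq x v))%N by rewrite size_nseq.
exists (swap_row _), (swap_row _); rewrite /Pset /Ple.
split; [|split; [|split; [|split]]].
- by move=> p Pp; apply/(inPi_swap hvx (tail_v p Pp)).
- by move=> q Pq; apply/(inPi_swap hxv (tail_x q Pq)).
- by move=> p /tail_v; apply: swap_rowK.
- by move=> q /tail_x; apply: swap_rowK.
- move=> p1 p2 /tail_v t1 /tail_v t2.
  by rewrite -swap_rowB; apply: iff_sym; exact: inPi_swap hvx (tail_constB _ _ t1 t2).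
Qed.
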